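(* Every simply typable term of $\Lambda J$ (i.e. every $t\in\mathtt T_J$ such that $\Gamma\vdash t:A$ is derivable in the simple type system below for some $\Gamma$ and $A$) is strongly normalizing for $\to_{d\beta}$, i.e. $t\in SN_{d\beta}$.
   Context: Terms $\mathtt T_J$: $t,u,r ::= x \mid \lambda x.t \mid t(u,y.r)$ (generalized application; $y$ is bound in $r$), taken up to $\alpha$-equivalence; $\{u/x\}t$ is capture-avoiding substitution and $\mathrm{fv}(t)$ the free variables. List contexts: $\mathtt D ::= \Diamond \mid t(u,y.\mathtt D)$, with $\mathtt D\langle s\rangle$ the term obtained by replacing the hole by $s$. The distant beta rule is $\mathtt D\langle\lambda x.t\rangle(u,y.r) \mapsto_{d\beta} \{\{u/x\}\mathtt D\langle t\rangle/y\}r$ (by $\alpha$-conversion, variables bound by $\mathtt D$ are not free in $u$ and $x$ does not occur in $\mathtt D$), and $\to_{d\beta}$ is its closure under all term contexts. $SN_{d\beta}$ is the set of terms admitting no infinite $\to_{d\beta}$-sequence. Simple types $A,B,C ::= \alpha \mid A\to B$; contexts $\Gamma$ are finite maps from variables to simple types; rules: $\Gamma,x:A\vdash x:A$; from $\Gamma,x:A\vdash t:B$ infer $\Gamma\vdash\lambda x.t:A\to B$; from $\Gamma\vdash t:A\to B$, $\Gamma\vdash u:A$ and $\Gamma,y:B\vdash r:C$ infer $\Gamma\vdash t(u,y.r):C$. *)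

(* Terms of Lambda-J in de Bruijn notation (alpha-equivalence is
   syntactic equality). *)
From Stdlib Require Import Arith List.

Inductive term : Type :=
| Var : nat -> term
| Lam : term -> term                  (* \x.t, x = index 0 in t *)
| GApp : term -> term -> term -> term (* t(u, y.r), y = index 0 in r *).

Fixpoint lift (k c : nat) (t : term) : term :=
  match t with
  | Var n => if Nat.ltb n c then Var n else Var (n + k)
  | Lam b => Lam (lift k (S c) b)
  | GApp t u r => GApp (lift k c t) (lift k c u) (lift k (S c) r)
  end.

(* subst j s t : capture-avoiding substitution of s for index j in t,
   indices > j are decremented (the binder of j disappears). *)
Fixpoint subst (j : nat) (s : term) (t : term) : term :=
  match t with
  | Var n =>
      if Nat.ltb n j then Var n
      else if Nat.eqb n j then lift j 0 s
      else Var (n - 1)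
  | Lam b => Lam (subst (S j) s b)
  | GApp t u r => GApp (subst j s t) (subst j s u) (subst (S j) s r)
  end.

(* List contexts D ::= <> | t(u, y.D); the hole lies under the binder y. *)
Inductive lctx : Type :=
| Hole : lctx
| DApp : term -> term -> lctx -> lctx.

Fixpoint plug (D : lctx) (s : term) : term :=
  match D with
  | Hole => s
  | DApp t u D' => GApp t u (plug D' s)
  end.

Fixpoint depth (D : lctx) : nat :=
  match D with
  | Hole => 0
  | DApp _ _ D' => S (depth D')
  end.

(* Root distant beta:  D<\x.t>(u, y.r) |-> {{u/x}D<t> / y} r.
   Since x does not occur in D, {u/x}D<t> = D<{u/x}t>, where inside D
   (under depth D binders) u must be lifted by depth D. *)
Inductive dbeta_root : term -> term -> Prop :=
| dbeta_intro : forall D t u r,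
    dbeta_root (GApp (plug D (Lam t)) u r)
               (subst 0 (plug D (subst 0 (lift (depth D) 0 u) t)) r).

Inductive dbeta : term -> term -> Prop :=
| db_root : forall t t', dbeta_root t t' -> dbeta t t'
| db_lam : forall t t', dbeta t t' -> dbeta (Lam t) (Lam t')
| db_app1 : forall t t' u r, dbeta t t' -> dbeta (GApp t u r) (GApp t' u r)
| db_app2 : forall t u u' r, dbeta u u' -> dbeta (GApp t u r) (GApp t u' r)
| db_app3 : forall t u r r', dbeta r r' -> dbeta (GApp t u r) (GApp t u r').

Inductive SN (R : term -> term -> Prop) : term -> Prop :=
| SN_intro : forall t, (forall t', R t t' -> SN R t') -> SN R t.

Definition SN_dbeta (t : term) : Prop := SN dbeta t.

Inductive ty : Type :=
| TVar : nat -> ty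
| Arr : ty -> ty -> ty.

(* Contexts: list of types, index n gets the n-th entry (de Bruijn). *)
Definition ctx := list ty.

Inductive typing : ctx -> term -> ty -> Prop :=
| ty_var : forall G n A, nth_error G n = Some A -> typing G (Var n) A
| ty_lam : forall G t A B, typing (A :: G) t B -> typing G (Lam t) (Arr A B)
| ty_app : forall G t u r A B C,
    typing G t (Arr A B) -> typing G u A -> typing (B :: G) r C ->
    typing G (GApp t u r) C.

(* Tait-Girard reducibility.  A term is reducible at a base type if it is
   strongly normalizing, and at A -> B if t(u, y.y) is reducible at B for
   every u reducible at A.  Reducible terms are SN and variables applied to SN
   arguments are reducible, so everything rests on two expansion lemmas for
   spines t(v1, y.y)...(vn, y.y): a spine headed by (\x.s)(u, y.y) is SN
   when u and the spine headed by {u/x}s are, and a spine headed by t(u, y.r)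
   is SN when t(u, y.y) and the spine headed by {t(u, y.y)/y}r are.  In the
   second lemma the delicate reduct is a distant beta step between the
   innermost argument of the spine and an abstraction at the end of the list
   context r; it is matched by the same step in {t(u, y.y)/y}r. *)

From Stdlib Require Import Arith List Lia Relations.
Import ListNotations.

Ltac index_cases :=
  repeat (progress cbn [lift subst] ||
          match goal with
          | |- context [Nat.ltb ?a ?b] => destruct (Nat.ltb_spec a b)
          | |- context [Nat.eqb ?a ?b] => destruct (Nat.eqb_spec a b)
          end);
  try (exfalso; lia); try (f_equal; lia).

Lemma lift_0 : forall t c, lift 0 c t = t.
Proof. induction t; intros; cbn [lift]; [index_cases | f_equal; auto ..]. Qed.

Lemma simpl_lift : forall M n k p i, k <= i <= k + n ->
  lift p i (lift n k M) = lift (p + n) k M.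
Proof.
  induction M; intros; cbn [lift]; [index_cases | f_equal; apply IHM; lia |].
  f_equal; [apply IHM1 | apply IHM2 | apply IHM3]; lia.
Qed.

Lemma permute_lift : forall M n k p i, i <= k ->
  lift p i (lift n k M) = lift n (p + k) (lift p i M).
Proof.
  induction M; intros; cbn [lift]; [index_cases | |].
  - rewrite IHM by lia. do 2 f_equal; lia.
  - rewrite IHM1, IHM2, IHM3 by lia. do 2 f_equal; lia.
Qed.

Lemma simpl_subst : forall M N n p k, p <= n + k -> k <= p ->
  subst p N (lift (S n) k M) = lift n k M.
Proof.
  induction M; intros; cbn [lift subst]; [index_cases | f_equal; apply IHM; lia |].
  f_equal; [apply IHM1 | apply IHM2 | apply IHM3]; lia.
Qed.

Lemma commut_lift_subst : forall M N n p k, k <= p ->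
  lift n k (subst p N M) = subst (n + p) N (lift n k M).
Proof.
  induction M as [m | M IHM | M1 IHM1 M2 IHM2 M3 IHM3]; intros; cbn [lift subst].
  - index_cases. subst. rewrite simpl_lift by lia. f_equal; lia.
  - rewrite IHM by lia. do 2 f_equal; lia.
  - rewrite IHM1, IHM2, IHM3 by lia. do 2 f_equal; lia.
Qed.

Lemma distr_lift_subst : forall M N n p k,
  lift n (p + k) (subst p N M) = subst p (lift n k N) (lift n (S (p + k)) M).
Proof.
  induction M as [m | M IHM | M1 IHM1 M2 IHM2 M3 IHM3]; intros; cbn [lift subst].
  - index_cases. subst. rewrite (permute_lift N n k p 0) by lia. reflexivity.
  - f_equal. apply (IHM N n (S p) k).
  - f_equal; [apply IHM1 | apply IHM2 | apply (IHM3 N n (S p) k)].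
Qed.

Lemma distr_subst : forall M N P n p,
  subst (p + n) P (subst p N M) = subst p (subst n P N) (subst (S (p + n)) P M).
Proof.
  induction M as [m | M IHM | M1 IHM1 M2 IHM2 M3 IHM3]; intros; cbn [subst].
  - index_cases; subst.
    + rewrite commut_lift_subst by lia. f_equal; lia.
    + rewrite simpl_subst by lia. f_equal; lia.
  - f_equal. apply (IHM N P n (S p)).
  - f_equal; [apply IHM1 | apply IHM2 | apply (IHM3 N P n (S p))].
Qed.

Lemma subst_var0 : forall t, subst 0 t (Var 0) = t.
Proof. intros. apply lift_0. Qed.

Fixpoint lift_lctx (n k : nat) (D : lctx) : lctx :=
  match D with
  | Hole => Hole
  | DApp t u D' => DApp (lift n k t) (lift n k u) (lift_lctx n (S k) D')
  end.

Fixpoint subst_lctx (j : nat) (s : term) (D : lctx) : lctx :=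
  match D with
  | Hole => Hole
  | DApp t u D' => DApp (subst j s t) (subst j s u) (subst_lctx (S j) s D')
  end.

Lemma depth_lift_lctx : forall D n k, depth (lift_lctx n k D) = depth D.
Proof. induction D; simpl; auto. Qed.

Lemma depth_subst_lctx : forall D j s, depth (subst_lctx j s D) = depth D.
Proof. induction D; simpl; auto. Qed.

Lemma lift_plug : forall D n k s,
  lift n k (plug D s) = plug (lift_lctx n k D) (lift n (depth D + k) s).
Proof.
  induction D; intros; simpl; auto.
  rewrite IHD. do 3 f_equal. lia.
Qed.

Lemma subst_plug : forall D j v s,
  subst j v (plug D s) = plug (subst_lctx j v D) (subst (depth D + j) v s).
Proof.
  induction D; intros; simpl; auto.
  rewrite IHD. do 3 f_equal. lia.
Qed.

Lemma plug_lam_neq_var : forall D s n, plug D (Lam s) <> Var n.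
Proof. destruct D; discriminate. Qed.

Lemma plug_lam_eq_lam : forall D s s', plug D (Lam s) = Lam s' -> D = Hole /\ s = s'.
Proof. destruct D; simpl; intros s s' E; [injection E; auto | discriminate]. Qed.

Lemma dbeta_var_inv : forall n t, ~ dbeta (Var n) t.
Proof. intros n t H. inversion H as [? ? Hr| | | |]. inversion Hr. Qed.

Lemma dbeta_lam_inv : forall s t, dbeta (Lam s) t -> exists s', dbeta s s' /\ t = Lam s'.
Proof. intros s t H. inversion H as [? ? Hr| | | |]; subst; [inversion Hr | eauto]. Qed.

Lemma dbeta_lift : forall t t', dbeta t t' -> forall n k, dbeta (lift n k t) (lift n k t').
Proof.
  induction 1 as [t t' [D s u r]| | | |]; intros n k; cbn [lift];
    [| apply db_lam | apply db_app1 | apply db_app2 | apply db_app3]; auto.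
  apply db_root.
  pose proof (dbeta_intro (lift_lctx n k D) (lift n (S (depth D + k)) s)
                          (lift n k u) (lift n (S k) r)) as H.
  rewrite depth_lift_lctx in H.
  rewrite lift_plug, (distr_lift_subst r _ n 0 k). cbn [lift plus]. rewrite lift_plug.
  rewrite (distr_lift_subst s _ n 0 (depth D + k)). cbn [plus].
  rewrite <- (permute_lift u n k (depth D) 0) by lia.
  exact H.
Qed.

Lemma dbeta_subst : forall t t', dbeta t t' -> forall j v, dbeta (subst j v t) (subst j v t').
Proof.
  induction 1 as [t t' [D s u r]| | | |]; intros j v; cbn [subst];
    [| apply db_lam | apply db_app1 | apply db_app2 | apply db_app3]; auto.
  apply db_root.
  pose proof (dbeta_intro (subst_lctx j v D) (subst (S (depth D + j)) v s)
                          (subst j v u) (subst (S j) v r)) as H.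
  rewrite depth_subst_lctx in H.
  rewrite subst_plug, (distr_subst r _ v j 0). cbn [subst plus]. rewrite subst_plug.
  rewrite (distr_subst s _ v (depth D + j) 0). cbn [plus].
  rewrite <- (commut_lift_subst u v (depth D) j 0) by lia.
  exact H.
Qed.

Notation dbeta_star := (clos_refl_trans term dbeta).

Lemma dbeta_star_congr : forall f : term -> term,
  (forall x y, dbeta x y -> dbeta (f x) (f y)) ->
  forall a b, dbeta_star a b -> dbeta_star (f a) (f b).
Proof. intros f Hf; induction 1; eauto using rt_step, rt_refl, rt_trans. Qed.

Lemma dbeta_star_gapp : forall t t' u u' r r',
  dbeta_star t t' -> dbeta_star u u' -> dbeta_star r r' ->
  dbeta_star (GApp t u r) (GApp t' u' r').
Proof.
  intros t t' u u' r r' Ht Hu Hr.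
  apply rt_trans with (GApp t' u r);
    [apply (dbeta_star_congr (fun x => GApp x u r)); [intros; apply db_app1 | ]; auto |].
  apply rt_trans with (GApp t' u' r);
    [apply (dbeta_star_congr (fun x => GApp t' x r)); [intros; apply db_app2 | ]; auto |].
  apply (dbeta_star_congr (fun x => GApp t' u' x)); [intros; apply db_app3 | ]; auto.
Qed.

Lemma dbeta_star_subst_arg : forall s j u u',
  dbeta u u' -> dbeta_star (subst j u s) (subst j u' s).
Proof.
  induction s as [m | s IH | s1 IH1 s2 IH2 s3 IH3]; intros j u u' H; cbn [subst].
  - destruct (m <? j); [apply rt_refl |].
    destruct (m =? j); [apply rt_step, dbeta_lift; exact H | apply rt_refl].
  - apply (dbeta_star_congr Lam); [apply db_lam | auto].
  - apply dbeta_star_gapp; auto.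
Qed.

Section StrongNormalization.

Variable R : term -> term -> Prop.

Lemma SN_step : forall t t', SN R t -> R t t' -> SN R t'.
Proof. intros t t' [? H]; apply H. Qed.

Lemma SN_star : forall t t', SN R t -> clos_refl_trans term R t t' -> SN R t'.
Proof. intros t t' H Hs; induction Hs; eauto using SN_step. Qed.

Lemma SN_preimage : forall f : term -> term,
  (forall x y, R x y -> R (f x) (f y)) -> forall x, SN R (f x) -> SN R x.
Proof.
  intros f Hf x H. remember (f x) as y eqn:Ey. revert x Ey.
  induction H as [y _ IH]; intros x ->.
  constructor. intros x' Hx. exact (IH _ (Hf _ _ Hx) x' eq_refl).
Qed.

End StrongNormalization.

(* [apps w [v1; ...; vn]] is [w(vn, y.y) ... (v1, y.y)]: the head of the list
   is the outermost argument. *)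
Fixpoint apps (w : term) (l : list term) : term :=
  match l with
  | [] => w
  | v :: l' => GApp (apps w l') v (Var 0)
  end.

Lemma dbeta_apps_head : forall l w w', dbeta w w' -> dbeta (apps w l) (apps w' l).
Proof. induction l; simpl; intros; auto using db_app1. Qed.

Lemma apps_snoc : forall l v w, apps w (l ++ [v]) = apps (GApp w v (Var 0)) l.
Proof. induction l; simpl; intros; f_equal; auto. Qed.

Lemma apps_cons_neq_plug_lam : forall w v l D s, apps w (v :: l) <> plug D (Lam s).
Proof.
  intros w v l [| t u D] s E; simpl in E; [discriminate |].
  injection E as _ _ E. symmetry in E. exact (plug_lam_neq_var _ _ _ E).
Qed.

Lemma dbeta_apps_inv : forall l w z, dbeta (apps w l) z ->
  (exists w', dbeta w w' /\ z = apps w' l) \/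
  (exists l', (forall w0, dbeta (apps w0 l) (apps w0 l')) /\ z = apps w l') \/
  (exists l0 v D s, l = l0 ++ [v] /\ w = plug D (Lam s) /\
     z = apps (plug D (subst 0 (lift (depth D) 0 v) s)) l0).
Proof.
  induction l as [| v l IH]; simpl; intros w z H; [left; eauto |].
  inversion H as [? ? Hr | | ? t' ? ? Ht | ? ? u' ? Hu | ? ? ? ? Hv]; subst.
  - inversion Hr as [D s ? ? Ew]; subst. destruct l as [| v' l'].
    + right; right. exists [], v, D, s. simpl. rewrite lift_0. auto.
    + exfalso. symmetry in Ew. exact (apps_cons_neq_plug_lam _ _ _ _ _ Ew).
  - destruct (IH _ _ Ht) as [[w' [Hw ->]] | [[l' [Hl ->]] | [l0 [v0 [D [s [-> [-> ->]]]]]]]].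
    + left; eauto.
    + right; left. exists (v :: l'). split; [intros; apply db_app1, Hl | reflexivity].
    + right; right. exists (v :: l0), v0, D, s. auto.
  - right; left. exists (u' :: l). split; [intros; apply db_app2, Hu | reflexivity].
  - exfalso. exact (dbeta_var_inv _ _ Hv).
Qed.

Definition var_spine (h : term) : Prop := exists n l, h = apps (Var n) l.

Lemma var_spine_neq_plug_lam : forall h D s, var_spine h -> h <> plug D (Lam s).
Proof.
  intros h D s [n [[| v l] ->]] E.
  - symmetry in E. exact (plug_lam_neq_var _ _ _ E).
  - exact (apps_cons_neq_plug_lam _ _ _ _ _ E).
Qed.

Lemma var_spine_step : forall h h', var_spine h -> dbeta h h' -> var_spine h'.
Proof.
  intros h h' [n [l ->]] H.
  destruct (dbeta_apps_inv _ _ _ H)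
    as [[w' [Hw _]] | [[l' [_ ->]] | [l0 [v0 [D [s [_ [Ew _]]]]]]]].
  - destruct (dbeta_var_inv _ _ Hw).
  - exists n, l'. reflexivity.
  - symmetry in Ew. destruct (plug_lam_neq_var _ _ _ Ew).
Qed.

Lemma SN_var_spine_app : forall h v,
  SN dbeta h -> SN dbeta v -> var_spine h -> SN dbeta (GApp h v (Var 0)).
Proof.
  intros h v Hh. revert v.
  induction Hh as [h Hh IHh]; intros v Hv Hs.
  induction Hv as [v Hv IHv].
  constructor. intros z Hz.
  inversion Hz as [? ? Hr | | ? h' ? ? Hh' | ? ? v' ? Hv' | ? ? ? ? H0]; subst.
  - inversion Hr as [D s ? ? Eh]; subst. destruct (var_spine_neq_plug_lam _ _ _ Hs eq_refl).
  - apply IHh; [exact Hh' | constructor; exact Hv | exact (var_spine_step _ _ Hs Hh')].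
  - apply IHv; exact Hv'.
  - destruct (dbeta_var_inv _ _ H0).
Qed.

Lemma SN_apps_var : forall n l, Forall (SN dbeta) l -> SN dbeta (apps (Var n) l).
Proof.
  intros n l Hl. induction Hl as [| v l Hv Hl IH]; simpl.
  - constructor. intros z Hz. destruct (dbeta_var_inv _ _ Hz).
  - apply SN_var_spine_app; [exact IH | exact Hv | exists n, l; reflexivity].
Qed.

Lemma SN_apps_beta_expand : forall s u l, SN dbeta s -> SN dbeta u ->
  SN dbeta (apps (subst 0 u s) l) -> SN dbeta (apps (GApp (Lam s) u (Var 0)) l).
Proof.
  intros s u l Hs. revert u l.
  induction Hs as [s Hs IHs]; intros u l Hu.
  revert l. induction Hu as [u Hu IHu]; intros l Hb.
  remember (apps (subst 0 u s) l) as b eqn:Eb. revert l Eb.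
  induction Hb as [b Hb IHb]; intros l ->.
  constructor. intros z Hz.
  destruct (dbeta_apps_inv _ _ _ Hz)
    as [[w' [Hw ->]] | [[l' [Hl ->]] | [l0 [v0 [D [s0 [_ [Ew _]]]]]]]].
  - inversion Hw as [? ? Hr | | ? t' ? ? Ht | ? ? u' ? Hu' | ? ? ? ? H0]; subst.
    + inversion Hr as [D s' ? ? Ew]; subst.
      destruct (plug_lam_eq_lam _ _ _ Ew); subst. simpl.
      rewrite !lift_0. constructor; exact Hb.
    + destruct (dbeta_lam_inv _ _ Ht) as [s' [Hs' ->]].
      apply IHs; [exact Hs' | constructor; exact Hu |].
      apply (SN_step _ (apps (subst 0 u s) l)); [constructor; exact Hb |].
      apply dbeta_apps_head, dbeta_subst, Hs'.
    + apply IHu; [exact Hu' |].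
      apply (SN_star _ (apps (subst 0 u s) l)); [constructor; exact Hb |].
      apply (dbeta_star_congr (fun x => apps x l)); [intros; apply dbeta_apps_head; auto |].
      apply dbeta_star_subst_arg, Hu'.
    + destruct (dbeta_var_inv _ _ H0).
  - eapply IHb; [apply Hl | reflexivity].
  - destruct D as [| t1 u1 D]; simpl in Ew; [discriminate |].
    injection Ew as _ _ Ew. symmetry in Ew. destruct (plug_lam_neq_var _ _ _ Ew).
Qed.

(* Firing a distant redex of [r] against an outer argument [v] commutes with
   substituting for the variable [y] bound above [r]. *)
Lemma dbeta_subst_plug_lam : forall D s v a,
  dbeta (GApp (subst 0 a (plug D (Lam s))) v (Var 0))
        (subst 0 a (plug D (subst 0 (lift (S (depth D)) 0 v) s))).
Proof.
  intros D s v a.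
  rewrite !subst_plug, Nat.add_0_r. cbn [subst].
  pose proof (dbeta_intro (subst_lctx 0 a D) (subst (S (depth D)) a s) v (Var 0)) as H.
  rewrite subst_var0, depth_subst_lctx in H.
  apply db_root.
  replace (subst (depth D) a (subst 0 (lift (S (depth D)) 0 v) s))
    with (subst 0 (lift (depth D) 0 v) (subst (S (depth D)) a s)); [exact H |].
  rewrite (distr_subst s _ a (depth D) 0). cbn [plus].
  f_equal. symmetry. apply simpl_subst; lia.
Qed.

Lemma SN_apps_gapp_expand : forall t u r l, SN dbeta (GApp t u (Var 0)) ->
  SN dbeta (apps (subst 0 (GApp t u (Var 0)) r) l) -> SN dbeta (apps (GApp t u r) l).
Proof.
  intros t u r l Ha. remember (GApp t u (Var 0)) as a eqn:Ea. revert t u r l Ea.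
  induction Ha as [a Ha IHa]; intros t u r l -> Hb.
  remember (apps (subst 0 (GApp t u (Var 0)) r) l) as b eqn:Eb. revert r l Eb.
  induction Hb as [b Hb IHb]; intros r l ->.
  assert (Hb_star : forall a', dbeta (GApp t u (Var 0)) a' ->
            SN dbeta (apps (subst 0 a' r) l)).
  { intros a' Ha'. apply (SN_star _ (apps (subst 0 (GApp t u (Var 0)) r) l));
      [constructor; exact Hb |].
    apply (dbeta_star_congr (fun x => apps x l)); [intros; apply dbeta_apps_head; auto |].
    apply dbeta_star_subst_arg, Ha'. }
  constructor. intros z Hz.
  destruct (dbeta_apps_inv _ _ _ Hz)
    as [[w' [Hw ->]] | [[l' [Hl ->]] | [l0 [v0 [D [s0 [-> [Ew ->]]]]]]]].
  - inversion Hw as [? ? Hr | | ? t' ? ? Ht | ? ? u' ? Hu | ? ? r' ? Hr]; subst.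
    + inversion Hr as [D s ? ? Et]; subst.
      rewrite <- (subst_var0 (plug D _)). apply Hb_star, db_root, dbeta_intro.
    + eapply IHa; [apply db_app1, Ht | reflexivity | apply Hb_star, db_app1, Ht].
    + eapply IHa; [apply db_app2, Hu | reflexivity | apply Hb_star, db_app2, Hu].
    + eapply IHb; [apply dbeta_apps_head, dbeta_subst, Hr | reflexivity].
  - eapply IHb; [apply Hl | reflexivity].
  - destruct D as [| t1 u1 D]; simpl in Ew; [discriminate |].
    injection Ew as -> -> ->. simpl.
    eapply IHb; [| reflexivity].
    rewrite apps_snoc. apply dbeta_apps_head, dbeta_subst_plug_lam.
Qed.

Fixpoint reducible (A : ty) (t : term) : Prop :=
  match A with
  | TVar _ => SN dbeta t
  | Arr A B => forall u, reducible A u -> reducible B (GApp t u (Var 0))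
  end.

Lemma reducible_SN_and_var_spine : forall A,
  (forall t, reducible A t -> SN dbeta t) /\
  (forall n l, Forall (SN dbeta) l -> reducible A (apps (Var n) l)).
Proof.
  induction A as [k | A [IA1 IA2] B [IB1 IB2]]; split; simpl.
  - auto.
  - apply SN_apps_var.
  - intros t Ht.
    apply (SN_preimage _ (fun x => GApp x (Var 0) (Var 0))); [intros; apply db_app1; auto |].
    apply IB1, Ht, (IA2 0 []), Forall_nil.
  - intros n l Hl u Hu. apply (IB2 n (u :: l)). constructor; auto.
Qed.

Lemma reducible_SN : forall A t, reducible A t -> SN dbeta t.
Proof. intros A. apply reducible_SN_and_var_spine. Qed.

Lemma reducible_var : forall A n, reducible A (Var n).
Proof. intros A n. apply (reducible_SN_and_var_spine A) with (l := []), Forall_nil. Qed.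

Lemma reducible_apps_beta_expand : forall B l s u, SN dbeta u ->
  reducible B (apps (subst 0 u s) l) -> reducible B (apps (GApp (Lam s) u (Var 0)) l).
Proof.
  induction B as [k | B1 _ B2 IB2]; simpl; intros l s u Hu H.
  - apply SN_apps_beta_expand; auto.
    apply (SN_preimage _ (subst 0 u)); [intros; apply dbeta_subst; auto |].
    apply (SN_preimage _ (fun x => apps x l)); [intros; apply dbeta_apps_head; auto |].
    exact H.
  - intros v Hv. apply (IB2 (v :: l)); [exact Hu | exact (H v Hv)].
Qed.

Lemma reducible_apps_gapp_expand : forall C l t u r, SN dbeta (GApp t u (Var 0)) ->
  reducible C (apps (subst 0 (GApp t u (Var 0)) r) l) -> reducible C (apps (GApp t u r) l).
Proof.
  induction C as [k | C1 _ C2 IC2]; simpl; intros l t u r Ha H.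
  - apply SN_apps_gapp_expand; auto.
  - intros v Hv. apply (IC2 (v :: l)); [exact Ha | exact (H v Hv)].
Qed.

Definition scons (u : term) (sg : nat -> term) (n : nat) : term :=
  match n with 0 => u | S n => sg n end.

Definition up (sg : nat -> term) : nat -> term :=
  scons (Var 0) (fun n => lift 1 0 (sg n)).

Fixpoint inst (sg : nat -> term) (t : term) : term :=
  match t with
  | Var n => sg n
  | Lam b => Lam (inst (up sg) b)
  | GApp t u r => GApp (inst sg t) (inst sg u) (inst (up sg) r)
  end.

Fixpoint upn (k : nat) (sg : nat -> term) : nat -> term :=
  match k with 0 => sg | S k => up (upn k sg) end.

Lemma upn_spec : forall k sg n,
  upn k sg n = if n <? k then Var n else lift k 0 (sg (n - k)).
Proof.
  induction k as [| k IH]; intros sg n; simpl.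
  - rewrite lift_0, Nat.sub_0_r. reflexivity.
  - unfold up, scons. destruct n as [| n]; [reflexivity |].
    rewrite IH. destruct (Nat.ltb_spec n k); destruct (Nat.ltb_spec (S n) (S k)); try lia.
    + cbn [lift]. index_cases.
    + rewrite simpl_lift by lia. reflexivity.
Qed.

Lemma subst_inst_upn : forall s k u sg,
  subst k u (inst (upn (S k) sg) s) = inst (upn k (scons u sg)) s.
Proof.
  induction s as [m | s IH | s1 IH1 s2 IH2 s3 IH3]; intros k u sg; cbn [inst subst].
  - rewrite !upn_spec. destruct (Nat.ltb_spec m (S k)).
    + index_cases. subst. rewrite Nat.sub_diag. reflexivity.
    + destruct (Nat.ltb_spec m k); [lia |]. rewrite simpl_subst by lia.
      replace (m - k) with (S (m - S k)) by lia. reflexivity.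
  - f_equal. apply (IH (S k)).
  - f_equal; [apply IH1 | apply IH2 | apply (IH3 (S k))].
Qed.

Lemma subst_inst_up : forall s u sg, subst 0 u (inst (up sg) s) = inst (scons u sg) s.
Proof. intros. apply (subst_inst_upn s 0). Qed.

Lemma up_ids : forall sg, (forall n, sg n = Var n) -> forall n, up sg n = Var n.
Proof.
  intros sg H [| n]; unfold up, scons; [reflexivity |].
  rewrite H. cbn [lift]. index_cases.
Qed.

Lemma inst_ids : forall t sg, (forall n, sg n = Var n) -> inst sg t = t.
Proof. induction t; intros sg Hsg; cbn [inst]; f_equal; auto using up_ids. Qed.

Definition reducible_subst (G : ctx) (sg : nat -> term) : Prop :=
  forall n B, nth_error G n = Some B -> reducible B (sg n).

Lemma reducible_subst_scons : forall G sg A u,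
  reducible_subst G sg -> reducible A u -> reducible_subst (A :: G) (scons u sg).
Proof.
  intros G sg A u Hsg Hu [| n] B HB; simpl in HB.
  - injection HB as <-. exact Hu.
  - exact (Hsg n B HB).
Qed.

Lemma typing_reducible : forall G t A, typing G t A ->
  forall sg, reducible_subst G sg -> reducible A (inst sg t).
Proof.
  induction 1 as [G n A HA | G t A B Ht IHt | G t u r A B C Ht IHt Hu IHu Hr IHr];
    intros sg Hsg; cbn [inst].
  - exact (Hsg n A HA).
  - intros v Hv. apply (reducible_apps_beta_expand B []); [exact (reducible_SN A v Hv) |].
    simpl. rewrite subst_inst_up. apply IHt, reducible_subst_scons; assumption.
  - assert (Happ : reducible B (GApp (inst sg t) (inst sg u) (Var 0)))
      by exact (IHt sg Hsg _ (IHu sg Hsg)).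
    apply (reducible_apps_gapp_expand C []); [exact (reducible_SN B _ Happ) |].
    simpl. rewrite subst_inst_up. apply IHr, reducible_subst_scons; assumption.
Qed.

Theorem mainTheorem1 : forall (G : ctx) (t : term) (A : ty),
  typing G t A -> SN_dbeta t.
Proof.
  intros G t A Ht. unfold SN_dbeta.
  apply (reducible_SN A). rewrite <- (inst_ids t Var) by reflexivity.
  apply (typing_reducible G t A Ht).
  intros n B _. apply reducible_var.
Qed.
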